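(* Fix an instance and a set $S$ of its jobs (e.g. the jobs of an optimum schedule). With respect to the random hierarchical decomposition (random offset $r_0$ chosen uniformly in $[0,T/q]$), the expected number of jobs of $S$ that are span-crossing is at most $\frac{\lambda+1}{q}|S|=O(\varepsilon|S|)$.
   Context: Jobs $j$ have integer release time $r_j$, deadline $d_j$ and processing time $p_j$ in $[0,T]$; $span_j=[r_j,d_j]$ and $|span_j|=d_j-r_j$. Fix $\varepsilon>0$ with $q=1/\varepsilon^2$ an integer, $\lambda=1/\varepsilon=\varepsilon q$, $k=\log_q T$ (assume $T$ is a power of $q$), and $\ell_i=T/q^{i+1}$ for $i\ge 0$. Random hierarchical decomposition: pick $r_0$ uniformly at random in $[0,T/q]$; for each $0\le i\le k$, the partition $I_i$ of $[0,T]$ consists of the intervals between consecutive points of $\{0,T\}\cup\big(\{r_0+s\ell_i: s\in\mathbb{Z}\}\cap(0,T)\big)$, so all intervals of $I_i$ have length $\ell_i$ except possibly the first and last, whose lengths sum to $\ell_i$; each interval of $I_i$ is a union of $q$ consecutive intervals of $I_{i+1}$ (first/last possibly fewer). Job classes: $j\in\mathcal{J}_0$ if $|span_j|\ge\lambda\ell_0$; $j\in\mathcal{J}_i$ ($1\le i\le k$) if $\lambda\ell_i\le|span_j|<\lambda\ell_{i-1}$; $j\in\mathcal{J}_{k+1}$ if $|span_j|<\lambda\ell_k$. A job $j$ is span-crossing if $j\in\mathcal{J}_i$ for some $2\le i\le k+1$ and $span_j$ intersects (in a set of positive length) more than one interval of $I_{i-2}$. *)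

From Stdlib Require Import Reals Lra List ZArith ClassicalEpsilon.
Open Scope R_scope.

Record job := Job { rel : nat; dl : nat; pt : nat }.

Definition Thor (q k : nat) : R := INR q ^ k.

Definition valid_job (q k : nat) (j : job) : Prop :=
  (rel j <= dl j)%nat /\ INR (dl j) <= Thor q k /\ INR (pt j) <= Thor q k.

Definition ell (q k i : nat) : R := Thor q k / INR q ^ (i + 1).

Definition breakpoint (q k : nat) (r0 : R) (i : nat) (x : R) : Prop :=
  x = 0 \/ x = Thor q k \/
  (exists s : Z, x = r0 + IZR s * ell q k i /\ 0 < x /\ x < Thor q k).

Definition part_interval (q k : nat) (r0 : R) (i : nat) (a b : R) : Prop :=
  a < b /\ breakpoint q k r0 i a /\ breakpoint q k r0 i b /\
  (forall x, a < x < b -> ~ breakpoint q k r0 i x).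

Definition span_len (j : job) : R := INR (dl j) - INR (rel j).

Definition meets_pos (j : job) (a b : R) : Prop :=
  Rmax (INR (rel j)) a < Rmin (INR (dl j)) b.

Definition in_class (eps : R) (q k i : nat) (j : job) : Prop :=
  let lam := 1 / eps in
  if Nat.eqb i 0 then lam * ell q k 0 <= span_len j
  else if Nat.leb i k then
    lam * ell q k i <= span_len j /\ span_len j < lam * ell q k (i - 1)
  else if Nat.eqb i (k + 1) then span_len j < lam * ell q k k
  else False.

Definition span_crossing (eps : R) (q k : nat) (r0 : R) (j : job) : Prop :=
  exists i : nat, (2 <= i <= k + 1)%nat /\ in_class eps q k i j /\
  exists a1 b1 a2 b2 : R,
    part_interval q k r0 (i - 2) a1 b1 /\ part_interval q k r0 (i - 2) a2 b2 /\
    (a1, b1) <> (a2, b2) /\ meets_pos j a1 b1 /\ meets_pos j a2 b2.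

(* number of jobs of S (a list; repeated entries are distinct jobs)
   that are span-crossing for offset r0 *)
Definition num_crossing (eps : R) (q k : nat) (S : list job) (r0 : R) : R :=
  fold_right (fun j acc =>
    (if excluded_middle_informative (span_crossing eps q k r0 j) then 1 else 0) + acc)
    0 S.

From Stdlib Require Import Reals Lra Lia ZArith ClassicalEpsilon List.
From Coquelicot Require Import Coquelicot.
Open Scope R_scope.

(* A job j of class i (2 <= i <= k+1) is span-crossing exactly when a cut point
   r0 + s * ell_(i-2) of I_(i-2) falls strictly inside span_j: two cells meeting span_j
   are separated by such a cut, and conversely the two cells adjacent to an interior cut
   both meet span_j.  As a function of r0 this indicator is ell_(i-2)-periodic, and
   [0, T/q] is exactly q^(i-2) periods, so its average is |span_j| / ell_(i-2)
   < lambda * ell_(i-1) / ell_(i-2) = eps <= (lambda + 1) / q.  Summing over S gives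
   the bound by linearity of the integral. *)

Lemma is_RInt_zero a b : is_RInt (fun _ => 0) a b 0.
Proof.
  pose proof (is_RInt_const a b 0) as Hconst.
  change (scal (b - a) 0) with ((b - a) * 0) in Hconst.
  rewrite Rmult_0_r in Hconst. exact Hconst.
Qed.

Section Periodic.

Variables (f : R -> R) (E : R).
Hypothesis E_pos : 0 < E.
Hypothesis f_periodic : forall x (n : Z), f (x + IZR n * E) = f x.

Lemma is_RInt_shift_periods a b I (n : Z) :
  is_RInt f a b I -> is_RInt f (a + IZR n * E) (b + IZR n * E) I.
Proof.
  intros H.
  pose proof (@is_RInt_comp_lin _ f 1 (- (IZR n * E)) (a + IZR n * E) (b + IZR n * E) I) as Hlin.
  eapply is_RInt_ext; [| apply Hlin].
  - intros x _. change (1 * f (1 * x + - (IZR n * E)) = f x).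
    replace (1 * x + - (IZR n * E)) with (x + IZR (- n) * E) by (rewrite opp_IZR; ring).
    rewrite f_periodic. ring.
  - replace (1 * (a + IZR n * E) + - (IZR n * E)) with a by ring.
    replace (1 * (b + IZR n * E) + - (IZR n * E)) with b by ring. exact H.
Qed.

(* [c, c + E] splits at [a + E]; its right part is the left part of [a, a + E] moved by one period. *)
Lemma is_RInt_period_from_within a c I : a <= c <= a + E ->
  is_RInt f a (a + E) I -> is_RInt f c (c + E) I.
Proof.
  intros Hc H.
  assert (Hac : ex_RInt f a c).
  { apply (@ex_RInt_Chasles_1 R_CompleteNormedModule) with (c := a + E); [lra | eexists; exact H]. }
  assert (Hca : ex_RInt f c (a + E)).
  { apply (@ex_RInt_Chasles_2 R_CompleteNormedModule) with (a := a); [lra | eexists; exact H]. }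
  pose proof (RInt_correct _ _ _ Hac) as Iac.
  pose proof (RInt_correct _ _ _ Hca) as Ica.
  pose proof (is_RInt_shift_periods _ _ _ 1 Iac) as Hshift.
  rewrite Rmult_1_l in Hshift.
  assert (Hsum : I = RInt f a c + RInt f c (a + E)).
  { rewrite <- (is_RInt_unique _ _ _ _ H).
    exact (is_RInt_unique _ _ _ _ (is_RInt_Chasles _ _ _ _ _ _ Iac Ica)). }
  rewrite Hsum, (Rplus_comm (RInt f a c)). exact (is_RInt_Chasles _ _ _ _ _ _ Ica Hshift).
Qed.

Lemma is_RInt_period_translate a c I :
  is_RInt f a (a + E) I -> is_RInt f c (c + E) I.
Proof.
  intros H.
  set (n := (up ((c - a) / E) - 1)%Z).
  destruct (archimed ((c - a) / E)) as [Hup1 Hup2].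
  assert (Hn : IZR n = IZR (up ((c - a) / E)) - 1) by (unfold n; rewrite minus_IZR; reflexivity).
  assert (Hdiv : (c - a) / E * E = c - a) by (field; lra).
  assert (Hlo : IZR n * E <= c - a).
  { rewrite <- Hdiv. apply Rmult_le_compat_r; lra. }
  assert (Hhi : c - a <= IZR n * E + E).
  { rewrite <- Hdiv. replace (IZR n * E + E) with ((IZR n + 1) * E) by ring.
    apply Rmult_le_compat_r; lra. }
  apply is_RInt_period_from_within with (a := a + IZR n * E); [lra |].
  replace (a + IZR n * E + E) with (a + E + IZR n * E) by ring.
  exact (is_RInt_shift_periods _ _ _ n H).
Qed.

Lemma is_RInt_periods c I (M : nat) :
  is_RInt f c (c + E) I -> is_RInt f c (c + INR M * E) (INR M * I).
Proof.
  intros H. induction M as [|M IH].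
  - simpl. rewrite Rmult_0_l, Rplus_0_r, Rmult_0_l. exact (is_RInt_point f c).
  - rewrite S_INR, Rmult_plus_distr_r, Rmult_1_l, Rmult_plus_distr_r, Rmult_1_l, <- Rplus_assoc.
    apply (is_RInt_Chasles f c (c + INR M * E) _ _ _ IH).
    pose proof (is_RInt_shift_periods _ _ _ (Z.of_nat M) H) as Hshift.
    rewrite <- INR_IZR_INZ in Hshift.
    replace (c + INR M * E + E) with (c + E + INR M * E) by ring. exact Hshift.
Qed.

End Periodic.

Definition grid_hit (r d E x : R) : Prop := exists s : Z, r < x + IZR s * E < d.

Definition grid_indicator (r d E x : R) : R :=
  if excluded_middle_informative (grid_hit r d E x) then 1 else 0.

Lemma grid_indicator_periodic r d E x (n : Z) :
  grid_indicator r d E (x + IZR n * E) = grid_indicator r d E x.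
Proof.
  unfold grid_indicator.
  destruct excluded_middle_informative as [[s Hs] | Hno1];
    destruct excluded_middle_informative as [[s' Hs'] | Hno2]; auto; exfalso.
  - apply Hno2. exists (s + n)%Z. rewrite plus_IZR. lra.
  - apply Hno1. exists (s' - n)%Z. rewrite minus_IZR. lra.
Qed.

Lemma is_RInt_grid_indicator_window r d E : 0 < E -> 0 <= d - r <= E ->
  is_RInt (grid_indicator r d E) r (r + E) (d - r).
Proof.
  intros HE Hrd.
  replace (d - r) with ((d - r) * 1 + (r + E - d) * 0) by ring.
  apply (is_RInt_Chasles _ r d (r + E) ((d - r) * 1) ((r + E - d) * 0)).
  - apply is_RInt_ext with (f := fun _ => 1); [| exact (is_RInt_const r d 1)].
    rewrite Rmin_left, Rmax_right by lra. intros x Hx.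
    unfold grid_indicator. destruct excluded_middle_informative as [_ | Hno]; auto.
    exfalso. apply Hno. exists 0%Z. lra.
  - apply is_RInt_ext with (f := fun _ => 0); [| exact (is_RInt_const d (r + E) 0)].
    rewrite Rmin_left, Rmax_right by lra. intros x Hx.
    unfold grid_indicator. destruct excluded_middle_informative as [[s Hs] | _]; auto.
    exfalso. destruct (Z_lt_le_dec s 0) as [Hs0 | Hs0].
    + apply Z.lt_le_pred in Hs0. apply IZR_le in Hs0. rewrite <- Z.sub_1_r, minus_IZR in Hs0. nra.
    + apply IZR_le in Hs0. nra.
Qed.

Lemma is_RInt_grid_indicator r d E (M : nat) : 0 < E -> 0 <= d - r <= E ->
  is_RInt (grid_indicator r d E) 0 (INR M * E) (INR M * (d - r)).
Proof.
  intros HE Hrd.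
  rewrite <- (Rplus_0_l (INR M * E)).
  apply is_RInt_periods; [apply grid_indicator_periodic |].
  apply is_RInt_period_translate with (a := r); [exact HE | apply grid_indicator_periodic |].
  exact (is_RInt_grid_indicator_window r d E HE Hrd).
Qed.

Section Scales.

Variables (q k : nat).
Hypothesis q_pos : (1 <= q)%nat.

Let INR_q_pos : 0 < INR q.
Proof. apply lt_0_INR; lia. Qed.

Lemma Thor_pos : 0 < Thor q k.
Proof. apply pow_lt, INR_q_pos. Qed.

Lemma ell_pos i : 0 < ell q k i.
Proof. apply Rdiv_lt_0_compat; [apply Thor_pos | apply pow_lt, INR_q_pos]. Qed.

Lemma ell_0 : ell q k 0 = Thor q k / INR q.
Proof. unfold ell. simpl. rewrite Rmult_1_r. reflexivity. Qed.

Lemma ell_S i : ell q k (S i) = ell q k i / INR q.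
Proof.
  unfold ell. replace (S i + 1)%nat with (S (i + 1)) by lia. simpl pow.
  pose proof (pow_lt _ (i + 1) INR_q_pos). field. lra.
Qed.

Lemma ell_0_pow i : ell q k 0 = INR (q ^ i) * ell q k i.
Proof.
  rewrite pow_INR. induction i as [|i IH]; [simpl; ring |].
  rewrite ell_S, IH. simpl. field. lra.
Qed.

Lemma ell_antimono i i' : (i <= i')%nat -> ell q k i' <= ell q k i.
Proof.
  intros Hii'. induction Hii' as [|i' _ IH]; [lra |].
  rewrite ell_S. apply Rle_trans with (ell q k i'); [| exact IH].
  pose proof (ell_pos i'). pose proof (le_INR 1 q q_pos). simpl in *.
  apply Rmult_le_reg_r with (INR q); [lra |]. field_simplify; nra.
Qed.

End Scales.

Lemma in_class_upper eps q k i j : (2 <= i <= k + 1)%nat -> in_class eps q k i j ->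
  span_len j < 1 / eps * ell q k (i - 1).
Proof.
  intros Hi H. unfold in_class in H.
  replace (Nat.eqb i 0) with false in H by (symmetry; apply Nat.eqb_neq; lia).
  destruct (Nat.leb i k) eqn:Hik; [tauto |].
  apply Nat.leb_gt in Hik. replace i with (k + 1)%nat in * by lia.
  rewrite Nat.eqb_refl in H. replace (k + 1 - 1)%nat with k by lia. exact H.
Qed.

Lemma in_class_lower eps q k i j : (2 <= i <= k)%nat -> in_class eps q k i j ->
  1 / eps * ell q k i <= span_len j.
Proof.
  intros Hi H. unfold in_class in H.
  replace (Nat.eqb i 0) with false in H by (symmetry; apply Nat.eqb_neq; lia).
  replace (Nat.leb i k) with true in H by (symmetry; apply Nat.leb_le; lia). tauto.
Qed.

Lemma in_class_unique eps q k i i' j : 0 < eps -> (1 <= q)%nat ->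
  (2 <= i <= k + 1)%nat -> (2 <= i' <= k + 1)%nat ->
  in_class eps q k i j -> in_class eps q k i' j -> i = i'.
Proof.
  intros Heps Hq.
  assert (Hlam : 0 < 1 / eps) by (apply Rdiv_lt_0_compat; lra).
  assert (Hlt : forall i i', (i < i')%nat -> (2 <= i <= k + 1)%nat -> (2 <= i' <= k + 1)%nat ->
            in_class eps q k i j -> in_class eps q k i' j -> False).
  { intros i0 i0' Hii Hi Hi' H H'.
    pose proof (in_class_lower eps q k i0 j ltac:(lia) H).
    pose proof (in_class_upper eps q k i0' j Hi' H').
    pose proof (ell_antimono q k Hq i0 (i0' - 1) ltac:(lia)). nra. }
  intros Hi Hi' H H'. destruct (Nat.lt_total i i') as [Hii | [Hii | Hii]]; auto; exfalso.
  - exact (Hlt i i' Hii Hi Hi' H H').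
  - exact (Hlt i' i Hii Hi' Hi H' H).
Qed.

Lemma q_pos_of_scale eps q : 0 < eps -> INR q = 1 / eps ^ 2 -> (1 <= q)%nat.
Proof.
  intros Heps Hq. apply INR_lt. rewrite Hq.
  apply Rdiv_lt_0_compat; [lra | apply pow_lt; lra].
Qed.

Lemma eps_le_1_of_scale eps q : 0 < eps -> INR q = 1 / eps ^ 2 -> eps <= 1.
Proof.
  intros Heps Hq.
  pose proof (le_INR 1 q (q_pos_of_scale eps q Heps Hq)) as Hq1. rewrite INR_1, Hq in Hq1.
  destruct (Rle_lt_dec eps 1) as [Hle | Hgt]; [exact Hle | exfalso].
  assert (Hsq : 1 < eps ^ 2) by nra.
  assert (1 / eps ^ 2 < 1) by (apply Rmult_lt_reg_r with (eps ^ 2); [lra | field_simplify; lra]).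
  lra.
Qed.

(* With q = 1/eps^2, lambda * ell_(i-1) = (1/eps) * ell_(i-2) / q = eps * ell_(i-2). *)
Lemma span_len_lt_of_class eps q k i j : 0 < eps -> INR q = 1 / eps ^ 2 ->
  (2 <= i <= k + 1)%nat -> in_class eps q k i j -> span_len j < eps * ell q k (i - 2).
Proof.
  intros Heps Hq Hi Hc.
  pose proof (q_pos_of_scale eps q Heps Hq) as Hq1.
  pose proof (in_class_upper eps q k i j Hi Hc) as Hup.
  replace (i - 1)%nat with (S (i - 2)) in Hup by lia.
  rewrite ell_S, Hq in Hup by exact Hq1.
  replace (1 / eps * (ell q k (i - 2) / (1 / eps ^ 2))) with (eps * ell q k (i - 2)) in Hup
    by (field; lra).
  exact Hup.
Qed.

Lemma IZR_mul_small_eq_0 (t : Z) E : 0 < E -> - E < IZR t * E < E -> t = 0%Z.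
Proof.
  intros HE Ht.
  assert (Hlo : -1 < IZR t) by (destruct (Rlt_le_dec (-1) (IZR t)); [assumption | nra]).
  assert (Hhi : IZR t < 1) by (destruct (Rlt_le_dec (IZR t) 1); [assumption | nra]).
  apply lt_IZR in Hlo. apply lt_IZR in Hhi. lia.
Qed.

Lemma meets_pos_separated j a1 b1 a2 b2 : meets_pos j a1 b1 -> meets_pos j a2 b2 ->
  b1 <= a2 -> INR (rel j) < b1 < INR (dl j).
Proof.
  unfold meets_pos. intros H1 H2 Hb.
  pose proof (Rmax_l (INR (rel j)) a1). pose proof (Rmin_r (INR (dl j)) b1).
  pose proof (Rmax_r (INR (rel j)) a2). pose proof (Rmin_l (INR (dl j)) b2). lra.
Qed.

Lemma part_intervals_ordered q k r0 l a1 b1 a2 b2 :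
  part_interval q k r0 l a1 b1 -> part_interval q k r0 l a2 b2 -> (a1, b1) <> (a2, b2) ->
  b1 <= a2 \/ b2 <= a1.
Proof.
  intros [Hab1 [Ha1 [Hb1 Hgap1]]] [Hab2 [Ha2 [Hb2 Hgap2]]] Hne.
  destruct (Rle_lt_dec b1 a2) as [H | H]; [now left |].
  destruct (Rle_lt_dec b2 a1) as [H' | H']; [now right |]. exfalso.
  destruct (Rtotal_order a1 a2) as [Ha | [Ha | Ha]].
  - exact (Hgap1 a2 ltac:(lra) Ha2).
  - destruct (Rtotal_order b1 b2) as [Hb | [Hb | Hb]].
    + exact (Hgap2 b1 ltac:(lra) Hb1).
    + apply Hne. now rewrite Ha, Hb.
    + exact (Hgap1 b2 ltac:(lra) Hb2).
  - exact (Hgap2 a1 ltac:(lra) Ha1).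
Qed.

Definition crosses_level (q k : nat) (r0 : R) (l : nat) (j : job) : Prop :=
  exists a1 b1 a2 b2 : R,
    part_interval q k r0 l a1 b1 /\ part_interval q k r0 l a2 b2 /\
    (a1, b1) <> (a2, b2) /\ meets_pos j a1 b1 /\ meets_pos j a2 b2.

Section Partition.

Variables (q k : nat) (r0 : R) (l : nat).
Hypothesis q_pos : (1 <= q)%nat.

Let T := Thor q k.
Let E := ell q k l.

Lemma breakpoint_bounds x : breakpoint q k r0 l x -> 0 <= x <= T.
Proof.
  pose proof (Thor_pos q k q_pos).
  intros [Hx | [Hx | [s [Hx Hrange]]]]; subst x; unfold T; lra.
Qed.

(* Distinct multiples of E differ by at least E. *)
Lemma no_breakpoint_near_grid_point (s : Z) z :
  0 < z < T -> z <> r0 + IZR s * E -> r0 + IZR s * E - E < z < r0 + IZR s * E + E ->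
  ~ breakpoint q k r0 l z.
Proof.
  intros Hz Hne Hnear [Hz0 | [HzT | [s' [Hs' _]]]]; [lra | unfold T in Hz; lra |].
  fold E in Hs'. apply Hne. subst z.
  assert (Hss : (s' - s)%Z = 0%Z).
  { apply (IZR_mul_small_eq_0 _ E (ell_pos q k q_pos l)). rewrite minus_IZR. lra. }
  replace s' with s by lia. reflexivity.
Qed.

Lemma part_intervals_at_grid_point (s : Z) : let x := r0 + IZR s * E in 0 < x < T ->
  part_interval q k r0 l (Rmax 0 (x - E)) x /\ part_interval q k r0 l x (Rmin T (x + E)).
Proof.
  intros x Hx. pose proof (ell_pos q k q_pos l) as HE. fold E in HE.
  assert (Bx : breakpoint q k r0 l x) by (right; right; exists s; auto).
  split; (split; [| split; [| split]]); try assumption.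
  - apply Rmax_lub_lt; lra.
  - unfold Rmax. destruct (Rle_dec 0 (x - E)) as [Hle | _]; [| now left].
    destruct (Req_dec (x - E) 0) as [H0 | Hpos]; [left; lra |].
    right; right. exists (s - 1)%Z. rewrite minus_IZR. fold E. unfold x, T in *. split; [ring | lra].
  - intros z Hz. apply (no_breakpoint_near_grid_point s); fold x;
      pose proof (Rmax_l 0 (x - E)); pose proof (Rmax_r 0 (x - E)); lra.
  - apply Rmin_glb_lt; lra.
  - unfold Rmin. destruct (Rle_dec T (x + E)) as [_ | Hlt]; [now right; left |].
    right; right. exists (s + 1)%Z. rewrite plus_IZR. fold E. unfold x, T in *. split; [ring | lra].
  - intros z Hz. apply (no_breakpoint_near_grid_point s); fold x;
      pose proof (Rmin_l T (x + E)); pose proof (Rmin_r T (x + E)); lra.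
Qed.

Lemma crosses_level_iff_grid_hit j : valid_job q k j ->
  crosses_level q k r0 l j <-> grid_hit (INR (rel j)) (INR (dl j)) E r0.
Proof.
  intros [Hrd [HdT _]]. fold T in HdT. pose proof (pos_INR (rel j)) as Hr0.
  split.
  - intros [a1 [b1 [a2 [b2 [P1 [P2 [Hne [M1 M2]]]]]]]].
    assert (Hcut : forall a1 b1 a2 b2, part_interval q k r0 l a1 b1 ->
              meets_pos j a1 b1 -> meets_pos j a2 b2 -> b1 <= a2 ->
              grid_hit (INR (rel j)) (INR (dl j)) E r0).
    { clear a1 b1 a2 b2 P1 P2 Hne M1 M2.
      intros a1 b1 a2 b2 [Hab [Ha [Hb _]]] M1 M2 Hle.
      pose proof (meets_pos_separated j a1 b1 a2 b2 M1 M2 Hle) as Hin.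
      pose proof (breakpoint_bounds a1 Ha).
      destruct Hb as [Hb | [Hb | [s [Hb _]]]]; [lra | unfold T in *; lra |].
      exists s. fold E in Hb. lra. }
    destruct (part_intervals_ordered q k r0 l a1 b1 a2 b2 P1 P2 Hne) as [H | H].
    + exact (Hcut a1 b1 a2 b2 P1 M1 M2 H).
    + exact (Hcut a2 b2 a1 b1 P2 M2 M1 H).
  - intros [s Hs]. set (x := r0 + IZR s * E) in Hs.
    assert (Hx : 0 < x < T) by lra.
    destruct (part_intervals_at_grid_point s Hx) as [P1 P2]. fold x in P1, P2.
    pose proof (ell_pos q k q_pos l) as HE. fold E in HE.
    assert (Hlo : Rmax 0 (x - E) < x) by (apply Rmax_lub_lt; lra).
    assert (Hhi : x < Rmin T (x + E)) by (apply Rmin_glb_lt; lra).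
    exists (Rmax 0 (x - E)), x, x, (Rmin T (x + E)).
    split; [exact P1 | split; [exact P2 | split; [| split]]].
    + intros Heq. injection Heq as Heq _. lra.
    + unfold meets_pos. apply Rmax_lub_lt; apply Rmin_glb_lt; lra.
    + unfold meets_pos. apply Rmax_lub_lt; apply Rmin_glb_lt; lra.
Qed.

End Partition.

Definition crossing_indicator (eps : R) (q k : nat) (j : job) (r0 : R) : R :=
  if excluded_middle_informative (span_crossing eps q k r0 j) then 1 else 0.

Lemma crossing_indicator_of_class eps q k i j : 0 < eps -> (1 <= q)%nat -> valid_job q k j ->
  (2 <= i <= k + 1)%nat -> in_class eps q k i j ->
  forall r0, crossing_indicator eps q k j r0 =
             grid_indicator (INR (rel j)) (INR (dl j)) (ell q k (i - 2)) r0.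
Proof.
  intros Heps Hq Hv Hi Hc r0.
  assert (Hiff : span_crossing eps q k r0 j <->
                 grid_hit (INR (rel j)) (INR (dl j)) (ell q k (i - 2)) r0).
  { rewrite <- (crosses_level_iff_grid_hit q k r0 (i - 2) Hq j Hv). split.
    - intros [i' [Hi' [Hc' Hcross]]].
      rewrite (in_class_unique eps q k i i' j Heps Hq Hi Hi' Hc Hc'). exact Hcross.
    - intros Hcross. exists i. auto. }
  unfold crossing_indicator, grid_indicator.
  destruct (excluded_middle_informative (span_crossing eps q k r0 j));
    destruct excluded_middle_informative; tauto.
Qed.

Lemma crossing_indicator_no_class eps q k j :
  ~ (exists i, (2 <= i <= k + 1)%nat /\ in_class eps q k i j) ->
  forall r0, crossing_indicator eps q k j r0 = 0.
Proof.
  intros Hno r0. unfold crossing_indicator.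
  destruct excluded_middle_informative as [[i [Hi [Hc _]]] | _]; [| reflexivity].
  exfalso. apply Hno. exists i. auto.
Qed.

Lemma is_RInt_crossing_indicator_le eps q k j : 0 < eps -> INR q = 1 / eps ^ 2 ->
  valid_job q k j ->
  exists I, is_RInt (crossing_indicator eps q k j) 0 (Thor q k / INR q) I /\
            I <= (1 / eps + 1) / INR q * (Thor q k / INR q).
Proof.
  intros Heps Hq Hv.
  pose proof (q_pos_of_scale eps q Heps Hq) as Hq1.
  pose proof (ell_pos q k Hq1 0) as Hperiod. rewrite ell_0 in Hperiod.
  assert (Hfactor : (1 / eps + 1) / INR q = eps + eps ^ 2) by (rewrite Hq; field; lra).
  rewrite Hfactor.
  destruct (excluded_middle_informative
              (exists i, (2 <= i <= k + 1)%nat /\ in_class eps q k i j)) as [[i [Hi Hc]] | Hno].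
  - set (E := ell q k (i - 2)). set (M := (q ^ (i - 2))%nat).
    pose proof (ell_pos q k Hq1 (i - 2)) as HE. fold E in HE.
    pose proof (span_len_lt_of_class eps q k i j Heps Hq Hi Hc) as Hspan. fold E in Hspan.
    unfold span_len in Hspan.
    assert (Hrd : INR (rel j) <= INR (dl j)) by (apply le_INR; apply Hv).
    assert (HME : INR M * E = Thor q k / INR q).
    { rewrite <- (ell_0 q k). symmetry. apply ell_0_pow, Hq1. }
    exists (INR M * (INR (dl j) - INR (rel j))). split.
    + rewrite <- HME.
      apply is_RInt_ext with (f := grid_indicator (INR (rel j)) (INR (dl j)) E).
      * intros x _. symmetry. apply (crossing_indicator_of_class eps q k i j); assumption.
      * pose proof (eps_le_1_of_scale eps q Heps Hq).
        apply is_RInt_grid_indicator; [exact HE | nra].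
    + pose proof (pos_INR M).
      apply Rle_trans with (INR M * (eps * E)); [nra |].
      replace (INR M * (eps * E)) with (eps * (INR M * E)) by ring. rewrite HME.
      pose proof (pow2_ge_0 eps). nra.
  - exists 0. split; [| pose proof (pow2_ge_0 eps); nra].
    apply is_RInt_ext with (f := fun _ => 0).
    + intros x _. symmetry. exact (crossing_indicator_no_class eps q k j Hno x).
    + apply is_RInt_zero.
Qed.

Lemma is_RInt_num_crossing_le eps q k S : 0 < eps -> INR q = 1 / eps ^ 2 ->
  (forall j, In j S -> valid_job q k j) ->
  exists I, is_RInt (num_crossing eps q k S) 0 (Thor q k / INR q) I /\
            I <= (1 / eps + 1) / INR q * (Thor q k / INR q) * INR (length S).
Proof.
  intros Heps Hq. induction S as [| j S IH]; intros Hv.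
  - exists 0. split; [| simpl; lra].
    apply is_RInt_zero.
  - destruct (is_RInt_crossing_indicator_le eps q k j Heps Hq (Hv j (in_eq j S)))
      as [Ij [HIj Hj]].
    destruct IH as [IS [HIS HS]]; [intros j' Hj'; apply Hv, in_cons, Hj' |].
    exists (Ij + IS). split.
    + exact (is_RInt_plus _ _ _ _ _ _ HIj HIS).
    + simpl length. rewrite S_INR. lra.
Qed.

Theorem mainTheorem6 (eps : R) (q k : nat) (S : list job) :
  0 < eps ->
  INR q = 1 / eps ^ 2 ->
  (forall j, In j S -> valid_job q k j) ->
  exists pr : Riemann_integrable (num_crossing eps q k S) 0 (Thor q k / INR q),
    RiemannInt pr / (Thor q k / INR q) <= (1 / eps + 1) / INR q * INR (length S).
Proof.
  intros Heps Hq Hv.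
  destruct (is_RInt_num_crossing_le eps q k S Heps Hq Hv) as [I [HI Hbound]].
  pose proof (ell_pos q k (q_pos_of_scale eps q Heps Hq) 0) as Hperiod.
  rewrite ell_0 in Hperiod.
  exists (ex_RInt_Reals_0 _ _ _ (ex_intro _ I HI)).
  rewrite <- RInt_Reals, (is_RInt_unique _ _ _ _ HI).
  apply Rmult_le_reg_r with (Thor q k / INR q); [exact Hperiod |].
  unfold Rdiv at 1. rewrite Rmult_assoc, Rinv_l, Rmult_1_r by lra. lra.
Qed.
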